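(* Let $R$ be a commutative ring and let $(A,d)$ be a left dg-semiprimary, left dg-Artinian differential graded $R$-algebra whose dg-radical $\mathrm{dgrad}_2(A)$ is nilpotent. Then $(A,d)$ is left dg-Noetherian and acyclic.
   Context: A differential graded (dg) $R$-algebra $(A,d)$ is a $\mathbb{Z}$-graded $R$-algebra $A$ with an $R$-linear degree-$1$ endomorphism $d$, $d^2=0$, $d(ab)=d(a)b+(-1)^{|a|}a\,d(b)$ for homogeneous $a,b$. A left dg-module $(M,\delta)$ is a graded left $A$-module with a degree-$1$ map $\delta$, $\delta^2=0$, $\delta(am)=d(a)m+(-1)^{|a|}a\,\delta(m)$; dg-submodules are graded submodules stable under $\delta$; $(S,\delta)$ is dg-simple if $S\ne0$ and its only dg-submodules are $0,S$. $(A,d)$ is left dg-Noetherian (resp. left dg-Artinian) if $A$, as left dg-module over itself, satisfies the ascending (resp. descending) chain condition on dg-submodules (left dg-ideals). Acyclic means $\ker(d)=\operatorname{im}(d)$. The dg-radical is $\mathrm{dgrad}_2(A)=\bigcap_{(S,\delta)}\operatorname{ann}(S,\delta)$, the intersection over all dg-simple left dg-modules of their left annihilators in $A$. $(A,d)$ is left dg-semiprimary if (i) $(A/\mathrm{dgrad}_2(A),\bar d)$ is semisimple in the categorical sense, i.e. every short exact sequence of left dg-modules over it splits, and (ii) every homogeneous idempotent of $A/\mathrm{dgrad}_2(A)$ is the image of a homogeneous idempotent of $A$ under the natural map. *)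

From HB Require Import structures.
From mathcomp Require Import all_boot all_order all_algebra.
Set Implicit Arguments.
Unset Strict Implicit.
Unset Printing Implicit Defensive.
Import GRing.Theory.
Local Open Scope ring_scope.

Definition ksign (V : zmodType) (n : int) (x : V) : V :=
  if odd `|n|%N then - x else x.

(* A Z-grading of an abelian group V: h n = set of homogeneous elements of
   degree n; V = (+)_n V_n (internal direct sum of subgroups). *)
Definition graded_zmod (V : zmodType) (h : int -> V -> Prop) : Prop :=
  (forall n, h n 0) /\
  (forall n x y, h n x -> h n y -> h n (x - y)) /\
  (forall x : V, exists (s : seq int) (f : int -> V),
      ((uniq s) /\ ((forall n, n \in s -> h n (f n))) /\ (x = \sum_(n <- s) f n))) /\
  (forall (s : seq int) (f : int -> V), uniq s ->
      (forall n, n \in s -> h n (f n)) -> \sum_(n <- s) f n = 0 ->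
      forall n, n \in s -> f n = 0).

Definition graded_sub (V : zmodType) (h : int -> V -> Prop) (N : V -> Prop) :=
  forall x, N x -> forall (s : seq int) (f : int -> V), uniq s ->
    (forall n, n \in s -> h n (f n)) -> x = \sum_(n <- s) f n ->
    forall n, n \in s -> N (f n).

Section DG.
Variables (R : comPzRingType) (A : algType R).

Definition is_dg_algebra (hom : int -> A -> Prop) (d : A -> A) : Prop :=
  ((graded_zmod hom) /\ ((forall n (r : R) x, hom n x -> hom n (r *: x))) /\ ((forall m n a b, hom m a -> hom n b -> hom (m + n) (a * b))) /\ ((forall (r : R) x y, d (r *: x + y) = r *: d x + d y)) /\ ((forall n x, hom n x -> hom (n + 1) (d x))) /\ ((forall x, d (d x) = 0)) /\ ((forall n a b, hom n a -> d (a * b) = d a * b + ksign n (a * d b)))).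

Definition is_dg_module (hom : int -> A -> Prop) (d : A -> A)
    (M : zmodType) (act : A -> M -> M) (homM : int -> M -> Prop)
    (delta : M -> M) : Prop :=
  ((graded_zmod homM) /\ ((forall a x y, act a (x + y) = act a x + act a y)) /\ ((forall a b x, act (a + b) x = act a x + act b x)) /\ ((forall x, act 1 x = x)) /\ ((forall a b x, act (a * b) x = act a (act b x))) /\ ((forall m n a x, hom m a -> homM n x -> homM (m + n) (act a x))) /\ ((forall x y, delta (x + y) = delta x + delta y)) /\ ((forall n x, homM n x -> homM (n + 1) (delta x))) /\ ((forall x, delta (delta x) = 0) /\
      (forall n a x, hom n a ->
          delta (act a x) = act (d a) x + ksign n (act a (delta x))))).

Record dgmod (hom : int -> A -> Prop) (d : A -> A) := DGMod {
  dgM :> zmodType;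
  dg_act : A -> dgM -> dgM;
  dg_hom : int -> dgM -> Prop;
  dg_delta : dgM -> dgM;
  dg_ax : is_dg_module hom d dg_act dg_hom dg_delta }.

Arguments dg_act {hom d} _ _ _.
Arguments dg_hom {hom d} _ _ _.
Arguments dg_delta {hom d} _ _.
Arguments dg_ax {hom d} _.
Variables (hom : int -> A -> Prop) (d : A -> A).

Definition is_dg_submod (M : dgmod hom d) (N : M -> Prop) : Prop :=
  ((N 0) /\ ((forall x y, N x -> N y -> N (x - y))) /\ ((forall a x, N x -> N (dg_act M a x))) /\ (graded_sub (dg_hom M) N) /\ ((forall x, N x -> N (dg_delta M x)))).

Definition dg_simple (M : dgmod hom d) : Prop :=
  (exists x : M, x <> 0) /\
  forall N : M -> Prop, is_dg_submod (M:=M) N -> (forall x, N x -> x = 0) \/ (forall x, N x).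

Definition is_left_dg_ideal (I : A -> Prop) : Prop :=
  ((I 0) /\ ((forall x y, I x -> I y -> I (x - y))) /\ ((forall a x, I x -> I (a * x))) /\ (graded_sub hom I) /\ ((forall x, I x -> I (d x)))).

Definition left_dg_noetherian : Prop :=
  forall I : nat -> A -> Prop, (forall k, is_left_dg_ideal (I k)) ->
  (forall k x, I k x -> I k.+1 x) ->
  exists N, forall k, (N <= k)%N -> forall x, I k x <-> I N x.

Definition left_dg_artinian : Prop :=
  forall I : nat -> A -> Prop, (forall k, is_left_dg_ideal (I k)) ->
  (forall k x, I k.+1 x -> I k x) ->
  exists N, forall k, (N <= k)%N -> forall x, I k x <-> I N x.

Definition acyclic : Prop :=
  forall x : A, d x = 0 <-> exists y, x = d y.

Definition dgrad (a : A) : Prop :=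
  forall M : dgmod hom d, dg_simple M -> forall m : M, dg_act M a m = 0.

Definition annihilated_by (J : A -> Prop) (M : dgmod hom d) : Prop :=
  forall a, J a -> forall m : M, dg_act M a m = 0.

Definition dg_morph (M1 M2 : dgmod hom d) (f : M1 -> M2) : Prop :=
  (((forall x y, f (x + y) = f x + f y)) /\ ((forall a x, f (dg_act M1 a x) = dg_act M2 a (f x))) /\ ((forall n x, dg_hom M1 n x -> dg_hom M2 n (f x))) /\ ((forall x, f (dg_delta M1 x) = dg_delta M2 (f x)))).

(* Left dg-modules over (A/J, dbar) are identified with the left dg-modules
   over (A, d) annihilated by J (isomorphism of categories). *)
Definition dg_semisimple_quot (J : A -> Prop) : Prop :=
  forall (M1 M2 M3 : dgmod hom d),
  annihilated_by J M1 -> annihilated_by J M2 -> annihilated_by J M3 ->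
  forall (f : M1 -> M2) (g : M2 -> M3), dg_morph f -> dg_morph g ->
  injective f -> (forall z, exists y, g y = z) ->
  (forall y, g y = 0 <-> exists x, y = f x) ->
  exists s : M3 -> M2, dg_morph s /\ forall z, g (s z) = z.

Definition left_dg_semiprimary : Prop :=
  dg_semisimple_quot dgrad /\
  (forall x, (exists n, hom n x) -> dgrad (x * x - x) ->
     exists e, ((exists n, hom n e) /\ (e * e = e) /\ (dgrad (e - x)))).

Definition dgrad_nilpotent : Prop :=
  exists n : nat, forall f : 'I_n -> A, (forall i, dgrad (f i)) ->
    \prod_(i < n) f i = 0.

End DG.

From HB Require Import structures.
From mathcomp Require Import all_boot all_order all_algebra zify.
From mathcomp Require Import boolp.
From Stdlib Require Import ClassicalEpsilon.

Set Implicit Arguments.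
Unset Strict Implicit.
Unset Printing Implicit Defensive.
Import GRing.Theory.
Local Open Scope ring_scope.

(* Since every short exact sequence of dg-modules killed by the
   radical J splits, the splitting of 0 -> M -> cone(id_M) -> M[1] -> 0 is a
   contraction, so in such a module every homogeneous cycle is a boundary.
   In A/J the class of 1 is a cycle, which gives z of degree -1 with
   j = 1 - dz in J.  As J is nilpotent, dz = 1 - j is invertible with inverse
   the cycle v = sum_i j^i, hence w = z v satisfies dw = 1, and every cycle x
   equals d(w x).

   The left annihilators Ann_j of J^j form a finite
   filtration of A by dg-ideals, with Ann_n = A when J^n = 0.  Each layer
   Ann_(j+1)/Ann_j is killed by J, so its dg-submodules have complements;
   an ascending chain in the layer gives a descending chain of complements,
   which stops by the Artinian hypothesis and stops the ascending chain
   with it. *)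

(** * Koszul signs and graded abelian groups *)

Lemma odd_absz_add (m n : int) : odd `|(m + n)%R|%N = odd `|m|%N (+) odd `|n|%N.
Proof.
have odd_mod2 x b : odd x = b -> (x %% 2 = b)%N by move <-; rewrite modn2.
case Hm: (odd `|m|%N); case Hn: (odd `|n|%N); case Hmn: (odd `|(m + n)%R|%N) => //=;
move/odd_mod2: Hm; move/odd_mod2: Hn; move/odd_mod2: Hmn => /= *; lia.
Qed.

Section KoszulSign.
Variable V : zmodType.
Implicit Types (m n : int) (x y : V).

Lemma ksign0 x : ksign 0 x = x.
Proof. by []. Qed.

Lemma ksignr0 n : ksign n (0 : V) = 0.
Proof. by rewrite /ksign; case: ifP => _ //; rewrite oppr0. Qed.

Lemma ksignN n x : ksign n (- x) = - ksign n x.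
Proof. by rewrite /ksign; case: ifP. Qed.

Lemma ksignD n x y : ksign n (x + y) = ksign n x + ksign n y.
Proof. by rewrite /ksign; case: ifP => _ //; rewrite opprD. Qed.

Lemma ksignK n : involutive (@ksign V n).
Proof. by move=> x; rewrite /ksign; case: (odd _) => //; rewrite opprK. Qed.

Lemma ksign_addz m n x : ksign (m + n) x = ksign m (ksign n x).
Proof.
rewrite /ksign odd_absz_add.
by case: (odd `|m|%N); case: (odd `|n|%N); rewrite //= opprK.
Qed.

Lemma ksignS n x : ksign (n + 1) x = - ksign n x.
Proof. by rewrite addrC ksign_addz. Qed.

End KoszulSign.

Lemma ksign_morph (V W : zmodType) (f : V -> W) :
  (forall y, f (- y) = - f y) -> forall n x, f (ksign n x) = ksign n (f x).
Proof. by move=> fN n x; rewrite /ksign; case: ifP. Qed.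

Section AdditiveMaps.
Variables (V W : zmodType) (f : V -> W).
Hypothesis fD : forall x y, f (x + y) = f x + f y.

Lemma additive0 : f 0 = 0.
Proof. by apply: (addrI (f 0)); rewrite -fD !addr0. Qed.

Lemma additiveN x : f (- x) = - f x.
Proof. by apply/eqP; rewrite -addr_eq0 -fD addNr additive0. Qed.

Lemma additiveB x y : f (x - y) = f x - f y.
Proof. by rewrite fD additiveN. Qed.

Lemma additive_sum (I : Type) (r : seq I) (P : pred I) (F : I -> V) :
  f (\sum_(i <- r | P i) F i) = \sum_(i <- r | P i) f (F i).
Proof. exact: (big_morph f fD additive0). Qed.

End AdditiveMaps.

Lemma sum_mem_subset (V : zmodType) (t s : seq int) (f : int -> V) :
  uniq t -> uniq s -> {subset s <= t} ->
  \sum_(n <- t) (if n \in s then f n else 0) = \sum_(n <- s) f n.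
Proof.
move=> ut us sst; rewrite -big_mkcond -big_filter; apply: perm_big.
apply: uniq_perm => //; first by rewrite filter_uniq.
by move=> n; rewrite mem_filter andb_idr //; apply: sst.
Qed.

Section GradedZmod.
Variables (V : zmodType) (h : int -> V -> Prop).

Definition gdec (x : V) : seq int * (int -> V) :=
  epsilon (inhabits ([::], fun _ => 0)) (fun p => [/\ uniq p.1,
    forall n, n \in p.1 -> h n (p.2 n) & x = \sum_(n <- p.1) p.2 n]).
Definition gsupp x := (gdec x).1.
Definition gcomp n x := if n \in gsupp x then (gdec x).2 n else 0.

Hypothesis hV : graded_zmod h.

Lemma homog0 n : h n 0.
Proof. by case: hV. Qed.

Lemma homogB n x y : h n x -> h n y -> h n (x - y).
Proof. by case: hV => _ [H _]; apply: H. Qed.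

Lemma homogN n x : h n x -> h n (- x).
Proof. by move=> hx; rewrite -sub0r; apply: homogB => //; apply: homog0. Qed.

Lemma homogD n x y : h n x -> h n y -> h n (x + y).
Proof. by move=> hx hy; rewrite -[y]opprK; apply: homogB => //; apply: homogN. Qed.

Lemma homog_sum n (I : Type) (r : seq I) (P : pred I) (F : I -> V) :
  (forall i, P i -> h n (F i)) -> h n (\sum_(i <- r | P i) F i).
Proof. by move=> H; apply: big_ind => //; [apply: homog0 | apply: homogD]. Qed.

Lemma gdecP x : [/\ uniq (gsupp x),
  forall n, n \in gsupp x -> h n ((gdec x).2 n) & x = \sum_(n <- gsupp x) (gdec x).2 n].
Proof.
suff ex_dec : exists p : seq int * (int -> V), [/\ uniq p.1,
    forall n, n \in p.1 -> h n (p.2 n) & x = \sum_(n <- p.1) p.2 n].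
  exact: epsilon_spec ex_dec.
case: hV => _ [_ [H _]].
by case: (H x) => s [f [us [hs e]]]; exists (s, f).
Qed.

Lemma gsupp_uniq x : uniq (gsupp x).
Proof. by case: (gdecP x). Qed.

Lemma homog_gcomp n x : h n (gcomp n x).
Proof.
rewrite /gcomp; case: ifP => nx; last exact: homog0.
by have [_ hs _] := gdecP x; apply: hs.
Qed.

Lemma gcomp_notin n x : n \notin gsupp x -> gcomp n x = 0.
Proof. by rewrite /gcomp => /negbTE ->. Qed.

Lemma sum_gcomp x : \sum_(n <- gsupp x) gcomp n x = x.
Proof.
have [_ _ e] := gdecP x; rewrite [RHS]e.
by apply: eq_big_seq => n ns; rewrite /gcomp ns.
Qed.

(* The uniqueness axiom of [graded_zmod], applied to the difference of two
   decompositions indexed by the union of their supports. *)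
Lemma gcomp_unique s f x : uniq s -> (forall n, n \in s -> h n (f n)) ->
  x = \sum_(n <- s) f n -> forall n, gcomp n x = if n \in s then f n else 0.
Proof.
move=> us hs xe n.
have [u0 h0s x0e] := gdecP x.
set s0 := gsupp x in u0 h0s x0e *; set f0 := (gdec x).2 in h0s x0e *.
set t := undup (s0 ++ s).
pose g n := (if n \in s0 then f0 n else 0) - (if n \in s then f n else 0).
have ut : uniq t by apply: undup_uniq.
have sub0 : {subset s0 <= t} by move=> m ms; rewrite mem_undup mem_cat ms.
have sub1 : {subset s <= t} by move=> m ms; rewrite mem_undup mem_cat ms orbT.
have sum_g : \sum_(m <- t) g m = 0 by rewrite sumrB !sum_mem_subset // -x0e -xe subrr.
have hg m : m \in t -> h m (g m).
  by move=> _; apply: homogB; case: ifP => ?; by [apply: h0s | apply: hs | apply: homog0].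
case: hV => _ [_ [_ Hu]].
rewrite /gcomp -/s0 -/f0; case nt: (n \in t).
  by have /eqP := Hu t g ut hg sum_g n nt; rewrite subr_eq0 => /eqP.
by move: nt; rewrite mem_undup mem_cat; case: (n \in s0); case: (n \in s).
Qed.

Lemma sum_gcomp_sup t x : uniq t -> {subset gsupp x <= t} ->
  \sum_(n <- t) gcomp n x = x.
Proof.
move=> ut st; rewrite -[RHS]sum_gcomp -(sum_mem_subset _ ut) ?gsupp_uniq //.
by apply: eq_bigr => n _; case: ifP => // /negbT /gcomp_notin.
Qed.

Lemma gcompD n x y : gcomp n (x + y) = gcomp n x + gcomp n y.
Proof.
set t := undup (gsupp x ++ gsupp y).
have ut : uniq t by apply: undup_uniq.
have e : x + y = \sum_(m <- t) (gcomp m x + gcomp m y).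
  by rewrite big_split /= !sum_gcomp_sup // => m mt; rewrite mem_undup mem_cat mt ?orbT.
rewrite (gcomp_unique ut _ e); last by move=> m _; apply: homogD; apply: homog_gcomp.
case: ifP => // /negbT; rewrite mem_undup mem_cat negb_or => /andP [nx ny].
by rewrite !gcomp_notin // addr0.
Qed.

Lemma gcomp0 n : gcomp n 0 = 0.
Proof. exact: (additive0 (gcompD n)). Qed.

Lemma gcomp_homog m x n : h m x -> gcomp n x = if n == m then x else 0.
Proof.
move=> hx; rewrite (gcomp_unique (s := [:: m]) (f := fun _ => x)) ?big_seq1 //.
  by rewrite mem_seq1.
by move=> k; rewrite mem_seq1 => /eqP ->.
Qed.

Lemma gcomp_inj x y : (forall n, gcomp n x = gcomp n y) -> x = y.
Proof.
move=> H; apply/eqP; rewrite -subr_eq0; apply/eqP.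
rewrite -(sum_gcomp (x - y)) big1 // => n _.
by rewrite (additiveB (gcompD n)) H subrr.
Qed.

Lemma homog_ind (P : V -> Prop) : P 0 -> (forall x y, P x -> P y -> P (x + y)) ->
  (forall n x, h n x -> P x) -> forall x, P x.
Proof.
move=> P0 PD Ph x; rewrite -(sum_gcomp x); apply: big_ind => // n _.
exact: Ph (homog_gcomp n x).
Qed.

Lemma graded_subP (N : V -> Prop) : N 0 ->
  graded_sub h N <-> forall x, N x -> forall n, N (gcomp n x).
Proof.
move=> N0; split=> [H x Nx n | H x Nx s f us hs e n ns].
  case ns: (n \in gsupp x); last by rewrite gcomp_notin ?ns.
  apply: (H x Nx (gsupp x) (gcomp^~ x)) => //; first exact: gsupp_uniq.
    by move=> m _; apply: homog_gcomp.
  by rewrite sum_gcomp.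
by have := gcomp_unique us hs e n; rewrite ns => <-; apply: H.
Qed.

End GradedZmod.

Lemma gcomp_morph (V W : zmodType) (h : int -> V -> Prop) (h' : int -> W -> Prop)
    (phi : V -> W) (k : int) :
  graded_zmod h -> graded_zmod h' ->
  (forall x y, phi (x + y) = phi x + phi y) ->
  (forall n v, h n v -> h' (n + k) (phi v)) ->
  forall n v, gcomp h' (n + k) (phi v) = phi (gcomp h n v).
Proof.
move=> hV hW phiD phih n v.
have e : phi v = \sum_(m <- map (+%R^~ k) (gsupp h v)) phi (gcomp h (m - k) v).
  rewrite big_map -{1}(sum_gcomp hV v) (additive_sum phiD).
  by apply: eq_bigr => j _; rewrite addrK.
have us : uniq (map (+%R^~ k) (gsupp h v)).
  by rewrite map_inj_uniq ?gsupp_uniq //; apply: addIr.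
rewrite (gcomp_unique hW us _ e); last first.
  by move=> m /mapP [j _ ->]; rewrite addrK; apply: phih; apply: homog_gcomp.
rewrite (mem_map (addIr k)) addrK; case: ifP => // /negbT nv.
by rewrite gcomp_notin // (additive0 phiD).
Qed.

Lemma graded_shift (V : zmodType) (h : int -> V -> Prop) (k : int) :
  graded_zmod h -> graded_zmod (fun n => h (n + k)).
Proof.
move=> hV; split; first by move=> n; apply: homog0.
split; first by move=> n x y; apply: homogB.
case: hV => _ [_ [Hex Hu]]; split.
  move=> x; case: (Hex x) => s [f [us [hs e]]].
  exists (map (fun n => n - k) s), (fun n => f (n + k)); split.
    by rewrite map_inj_uniq //; apply: addIr.
  split; first by move=> n /mapP [m ms ->]; rewrite subrK; apply: hs.
  by rewrite big_map; under eq_bigr do rewrite subrK.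
move=> s f us hs e n ns.
have := Hu (map (+%R^~ k) s) (fun m => f (m - k)) _ _ _ (n + k).
rewrite addrK; apply.
- by rewrite map_inj_uniq //; apply: addIr.
- by move=> m /mapP [j js ->]; rewrite addrK; apply: hs.
- by rewrite big_map; under eq_bigr do rewrite addrK.
- by apply/mapP; exists n.
Qed.

Lemma graded_prod (V W : zmodType) (h1 : int -> V -> Prop) (h2 : int -> W -> Prop) :
  graded_zmod h1 -> graded_zmod h2 ->
  graded_zmod (fun n (p : V * W) => h1 n p.1 /\ h2 n p.2).
Proof.
move=> H1 H2.
have sum1 s (F : int -> V * W) : (\sum_(n <- s) F n).1 = \sum_(n <- s) (F n).1.
  by apply: (big_morph fst).
have sum2 s (F : int -> V * W) : (\sum_(n <- s) F n).2 = \sum_(n <- s) (F n).2.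
  by apply: (big_morph snd).
split; first by move=> n; split; apply: homog0.
split; first by move=> n x y [? ?] [? ?]; split; apply: homogB.
split.
  move=> [x y]; set t := undup (gsupp h1 x ++ gsupp h2 y).
  have ut : uniq t by apply: undup_uniq.
  exists t, (fun n => (gcomp h1 n x, gcomp h2 n y)).
  split=> //; split; first by move=> n _; split; apply: homog_gcomp.
  apply: injective_projections; rewrite ?sum1 ?sum2 /= sum_gcomp_sup //.
    by move=> n nt; rewrite mem_undup mem_cat nt.
  by move=> n nt; rewrite mem_undup mem_cat nt orbT.
move=> s f us hs e n ns.
case: H1 => _ [_ [_ U1]]; case: H2 => _ [_ [_ U2]].
apply: injective_projections => /=.
  by apply: (U1 s (fun n => (f n).1)) => //; [move=> m /hs [] | rewrite -sum1 e].
by apply: (U2 s (fun n => (f n).2)) => //; [move=> m /hs [] | rewrite -sum2 e].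
Qed.

(** * Dg-algebras, dg-modules and the dg-radical *)

Section DGAlgebra.
Variables (R : comPzRingType) (A : algType R) (hom : int -> A -> Prop) (d : A -> A).
Hypothesis HA : is_dg_algebra hom d.

Lemma dga_graded : graded_zmod hom.
Proof. by case: HA. Qed.

Lemma homM m n a b : hom m a -> hom n b -> hom (m + n) (a * b).
Proof. by case: HA => _ [_ [H _]]; apply: H. Qed.

Lemma dD x y : d (x + y) = d x + d y.
Proof. by case: HA => _ [_ [_ [H _]]]; have := H 1 x y; rewrite !scale1r. Qed.

Lemma hom_d n x : hom n x -> hom (n + 1) (d x).
Proof. by case: HA => _ [_ [_ [_ [H _]]]]; apply: H. Qed.

Lemma dd0 x : d (d x) = 0.
Proof. by case: HA => _ [_ [_ [_ [_ [H _]]]]]; apply: H. Qed.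

Lemma d_Leibniz n a b : hom n a -> d (a * b) = d a * b + ksign n (a * d b).
Proof. by case: HA => _ [_ [_ [_ [_ [_ H]]]]]; apply: H. Qed.

Lemma d0 : d 0 = 0. Proof. exact: (additive0 dD). Qed.
Lemma dB x y : d (x - y) = d x - d y. Proof. exact: (additiveB dD). Qed.

(* For n != 0 the component 1_n kills every homogeneous x, since
   x = 1 * x has no component in degree n + deg x; hence 1_n = 1_n * 1 = 0. *)
Lemma hom_one : hom 0 1.
Proof.
have hA := dga_graded.
have one_comp_mul n x : n != 0 -> gcomp hom n 1 * x = 0.
  move=> n0; move: x; apply: (homog_ind hA (P := fun x => gcomp hom n 1 * x = 0)).
  - by rewrite mulr0.
  - by move=> x y Hx Hy; rewrite mulrDr Hx Hy addr0.
  move=> m x hx; rewrite -(@gcomp_morph _ _ hom hom (fun a => a * x) m) //.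
  - rewrite mul1r (gcomp_homog hA _ hx) ifN_eq //.
    by apply: contra n0 => /eqP E; rewrite -(addrK m n) E subrr.
  - by move=> a b; rewrite mulrDl.
  - by move=> j v hv; apply: homM.
suff -> : (1 : A) = gcomp hom 0 1 by apply: homog_gcomp.
apply: (gcomp_inj hA) => n; rewrite (gcomp_homog hA _ (homog_gcomp hA 0 1)).
by case: eqP => [-> // | /eqP n0]; rewrite -[LHS]mulr1 one_comp_mul.
Qed.

Lemma d1 : d 1 = 0.
Proof.
have := d_Leibniz 1 hom_one; rewrite !mul1r mulr1 ksign0.
by move=> E; apply: (addrI (d 1)); rewrite addr0 -E.
Qed.

Lemma gcomp_d n x : gcomp hom (n + 1) (d x) = d (gcomp hom n x).
Proof. exact: (gcomp_morph dga_graded dga_graded dD hom_d). Qed.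

Lemma gcomp_mull m a n x : hom m a -> gcomp hom (n + m) (a * x) = a * gcomp hom n x.
Proof.
move=> ha; apply: (gcomp_morph dga_graded dga_graded (phi := fun x => a * x)).
  by move=> *; rewrite mulrDr.
by move=> j v hv; rewrite addrC; apply: homM.
Qed.

Section DGModule.
Variable M : dgmod hom d.
Local Notation act := (@dg_act _ _ _ _ M).
Local Notation mhom := (@dg_hom _ _ _ _ M).
Local Notation delta := (@dg_delta _ _ _ _ M).

Lemma dgmod_graded : graded_zmod mhom.
Proof. by case: (dg_ax M). Qed.

Lemma actDr a x y : act a (x + y) = act a x + act a y.
Proof. by case: (dg_ax M) => _ [H _]; apply: H. Qed.

Lemma actDl a b x : act (a + b) x = act a x + act b x.
Proof. by case: (dg_ax M) => _ [_ [H _]]; apply: H. Qed.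

Lemma act1 x : act 1 x = x.
Proof. by case: (dg_ax M) => _ [_ [_ [H _]]]; apply: H. Qed.

Lemma actA a b x : act (a * b) x = act a (act b x).
Proof. by case: (dg_ax M) => _ [_ [_ [_ [H _]]]]; apply: H. Qed.

Lemma hom_act m n a x : hom m a -> mhom n x -> mhom (m + n) (act a x).
Proof. by case: (dg_ax M) => _ [_ [_ [_ [_ [H _]]]]]; apply: H. Qed.

Lemma deltaD x y : delta (x + y) = delta x + delta y.
Proof. by case: (dg_ax M) => _ [_ [_ [_ [_ [_ [H _]]]]]]; apply: H. Qed.

Lemma hom_delta n x : mhom n x -> mhom (n + 1) (delta x).
Proof. by case: (dg_ax M) => _ [_ [_ [_ [_ [_ [_ [H _]]]]]]]; apply: H. Qed.

Lemma delta_delta0 x : delta (delta x) = 0.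
Proof. by case: (dg_ax M) => _ [_ [_ [_ [_ [_ [_ [_ [H _]]]]]]]]; apply: H. Qed.

Lemma delta_Leibniz n a x : hom n a ->
  delta (act a x) = act (d a) x + ksign n (act a (delta x)).
Proof. by case: (dg_ax M) => _ [_ [_ [_ [_ [_ [_ [_ [_ H]]]]]]]]; apply: H. Qed.

Lemma act0r a : act a 0 = 0. Proof. exact: (additive0 (actDr a)). Qed.
Lemma act0l x : act 0 x = 0. Proof. exact: (additive0 (fun a b => actDl a b x)). Qed.
Lemma actBl a b x : act (a - b) x = act a x - act b x.
Proof. exact: (additiveB (fun a b => actDl a b x)). Qed.
Lemma delta0 : delta 0 = 0. Proof. exact: (additive0 deltaD). Qed.

End DGModule.

Local Notation J := (dgrad hom d).

Lemma dgrad0 : J 0.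
Proof. by move=> M _ m; apply: act0l. Qed.

Lemma dgradB x y : J x -> J y -> J (x - y).
Proof. by move=> Jx Jy M S m; rewrite actBl Jx // Jy // subrr. Qed.

Lemma dgradD x y : J x -> J y -> J (x + y).
Proof.
move=> Jx Jy; rewrite -[y]opprK; apply: dgradB => //.
by rewrite -sub0r; apply: dgradB => //; apply: dgrad0.
Qed.

Lemma dgrad_mull a x : J x -> J (a * x).
Proof. by move=> Jx M S m; rewrite actA Jx // act0r. Qed.

Lemma dgrad_mulr a x : J x -> J (x * a).
Proof. by move=> Jx M S m; rewrite actA Jx. Qed.

Lemma dgrad_gcomp n x : J x -> J (gcomp hom n x).
Proof.
move=> Jx M S; apply: (homog_ind (dgmod_graded M) (P := fun m => dg_act (gcomp hom n x) m = 0)).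
- exact: act0r.
- by move=> u v Hu Hv; rewrite actDr Hu Hv addr0.
move=> k m hm.
rewrite -(gcomp_morph (k := k) dga_graded (dgmod_graded M) (phi := @dg_act _ _ _ _ M ^~ m)).
- by rewrite Jx // gcomp0 //; apply: dgmod_graded.
- by move=> *; apply: actDl.
- by move=> j v hv; apply: hom_act.
Qed.

Lemma dgrad_d x : J x -> J (d x).
Proof.
move=> Jx; rewrite -(sum_gcomp dga_graded x) (additive_sum dD).
apply: big_ind => [|u v|n _]; [exact: dgrad0 | exact: dgradD |].
move=> M S m; have Jn := dgrad_gcomp n Jx.
have := delta_Leibniz m (homog_gcomp dga_graded n x).
by rewrite !(Jn M S) delta0 ksignr0 addr0 => <-.
Qed.

Lemma dgrad_ideal : is_left_dg_ideal hom d J.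
Proof.
split; first exact: dgrad0.
split; first exact: dgradB.
split; first by move=> *; apply: dgrad_mull.
split; last exact: dgrad_d.
by apply/(graded_subP dga_graded dgrad0) => x Jx n; apply: dgrad_gcomp.
Qed.

End DGAlgebra.

(** * Dg-ideals and subquotient dg-modules *)

Section DGIdeals.
Variables (R : comPzRingType) (A : algType R) (hom : int -> A -> Prop) (d : A -> A).

Record dgideal := DGIdeal {
  dgideal_pred :> A -> Prop;
  dgidealP : is_left_dg_ideal hom d dgideal_pred }.

Variable I : dgideal.

Lemma dgideal0 : I 0.
Proof. by case: (dgidealP I). Qed.

Lemma dgidealB x y : I x -> I y -> I (x - y).
Proof. by case: (dgidealP I) => _ [H _]; apply: H. Qed.

Lemma dgidealN x : I x -> I (- x).
Proof. by move=> Ix; rewrite -sub0r; apply: dgidealB => //; apply: dgideal0. Qed.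

Lemma dgidealD x y : I x -> I y -> I (x + y).
Proof. by move=> Ix Iy; rewrite -[y]opprK; apply: dgidealB => //; apply: dgidealN. Qed.

Lemma dgideal_mull a x : I x -> I (a * x).
Proof. by case: (dgidealP I) => _ [_ [H _]]; apply: H. Qed.

Lemma dgideal_graded : graded_sub hom I.
Proof. by case: (dgidealP I) => _ [_ [_ [H _]]]. Qed.

Lemma dgideal_d x : I x -> I (d x).
Proof. by case: (dgidealP I) => _ [_ [_ [_ H]]]; apply: H. Qed.

Lemma dgideal_sum (T : Type) (r : seq T) (P : pred T) (F : T -> A) :
  (forall i, P i -> I (F i)) -> I (\sum_(i <- r | P i) F i).
Proof. by move=> H; apply: big_ind => //; [apply: dgideal0 | apply: dgidealD]. Qed.

Lemma dgideal_ksign n x : I x -> I (ksign n x).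
Proof. by move=> Ix; rewrite /ksign; case: ifP => _ //; apply: dgidealN. Qed.

End DGIdeals.

Arguments dgideal0 {R A hom d} I.
Arguments dgideal_graded {R A hom d} I.

Ltac dgideal_closed := repeat first
  [ assumption | apply: dgidealD | apply: dgidealB | apply: dgidealN
  | apply: dgideal_mull | apply: dgideal_d | apply: dgideal_ksign ].

Section DGIdealConstructions.
Variables (R : comPzRingType) (A : algType R) (hom : int -> A -> Prop) (d : A -> A).
Hypothesis HA : is_dg_algebra hom d.

Lemma dgideal_gcomp (I : dgideal hom d) n x : I x -> I (gcomp hom n x).
Proof.
move=> Ix; have graded_I := (graded_subP (dga_graded HA) (dgideal0 I)).1 (dgideal_graded I).
exact: graded_I x Ix n.
Qed.

Lemma top_dgideal : is_left_dg_ideal hom d (fun _ => True).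
Proof. by do 4 (split => //); move=> *. Qed.

Lemma cap_dgideal (I1 I2 : dgideal hom d) : is_left_dg_ideal hom d (fun x => I1 x /\ I2 x).
Proof.
split; first by split; apply: dgideal0.
split; first by move=> x y [? ?] [? ?]; split; apply: dgidealB.
split; first by move=> a x [? ?]; split; apply: dgideal_mull.
split; last by move=> x [? ?]; split; apply: dgideal_d.
apply/(graded_subP (dga_graded HA)); first by split; apply: dgideal0.
by move=> x [? ?] n; split; apply: dgideal_gcomp.
Qed.

Lemma add_dgideal (I1 I2 : dgideal hom d) :
  is_left_dg_ideal hom d (fun x => exists2 y, I1 y & I2 (x - y)).
Proof.
have add0 : exists2 y, I1 y & I2 (0 - y) by exists 0; rewrite ?subrr; apply: dgideal0.
split; first exact: add0.
split.
  move=> x x' [y Iy Ixy] [y' Iy' Ixy']; exists (y - y'); first exact: dgidealB.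
  have -> : x - x' - (y - y') = (x - y) - (x' - y') by rewrite !opprD !opprK addrACA.
  exact: dgidealB.
split; first by move=> a x [y Iy Ixy]; exists (a * y); rewrite -?mulrBr; apply: dgideal_mull.
split.
  apply/(graded_subP (dga_graded HA) add0) => x [y Iy Ixy] n.
  exists (gcomp hom n y); first exact: dgideal_gcomp.
  by rewrite -(additiveB (gcompD (dga_graded HA) n)); apply: dgideal_gcomp.
by move=> x [y Iy Ixy]; exists (d y); rewrite -?(dB HA); apply: dgideal_d.
Qed.

Definition dgideal_top := DGIdeal top_dgideal.
Definition dgideal_cap I1 I2 := DGIdeal (cap_dgideal I1 I2).
Definition dgideal_add I1 I2 := DGIdeal (add_dgideal I1 I2).
Definition dgideal_rad := DGIdeal (dgrad_ideal HA).

End DGIdealConstructions.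

Section Subquotient.
Variables (R : comPzRingType) (A : algType R) (hom : int -> A -> Prop) (d : A -> A).
Variables (K L : dgideal hom d).

(* An element of [K / L] is encoded by the representative that [crepr]
   chooses in its class. *)
Definition crepr (x : A) : A := epsilon (inhabits 0) (fun y => K y /\ L (x - y)).
Definition is_crepr (x : A) : bool := `[< K x /\ crepr x = x >].
Definition subquot := {x : A | is_crepr x}.
HB.instance Definition _ := [isSub of subquot for @sval A is_crepr].
HB.instance Definition _ := [Choice of subquot by <:].

Lemma creprP x : K x -> K (crepr x) /\ L (x - crepr x).
Proof.
move=> Kx; apply: (epsilon_spec (inhabits 0) (fun y => K y /\ L (x - y))).
by exists x; rewrite subrr; split=> //; apply: dgideal0.
Qed.

Lemma crepr_eq x y : L (x - y) -> crepr x = crepr y.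
Proof.
move=> Lxy; rewrite /crepr; congr epsilon; apply: funext => z; apply: propext.
split=> -[Kz Lz]; split=> //.
  have -> : y - z = (x - z) - (x - y) by rewrite opprB [RHS]addrC addrA subrK.
  exact: dgidealB.
have -> : x - z = (x - y) + (y - z) by rewrite addrA subrK.
exact: dgidealD.
Qed.

Lemma is_crepr_crepr x : K x -> is_crepr (crepr x).
Proof.
move=> Kx; have [Kc Lc] := creprP Kx; apply/asboolP; split=> //.
by apply: crepr_eq; rewrite -opprB; apply: dgidealN.
Qed.

Definition qpi (x : A) : subquot :=
  insubd (Sub (crepr 0) (is_crepr_crepr (dgideal0 K))) (crepr x).

Lemma val_qpi x : K x -> val (qpi x) = crepr x.
Proof. by move=> Kx; rewrite /qpi insubdK //; apply: is_crepr_crepr. Qed.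

Lemma subquot_valP (q : subquot) : K (val q) /\ crepr (val q) = val q.
Proof. by apply/asboolP; case: q. Qed.

Lemma K_val (q : subquot) : K (val q).
Proof. by case: (subquot_valP q). Qed.

Lemma qpi_val (q : subquot) : qpi (val q) = q.
Proof. by apply: val_inj; rewrite val_qpi ?K_val //; case: (subquot_valP q). Qed.

Lemma qpi_surj (q : subquot) : exists2 x, K x & q = qpi x.
Proof. by exists (val q); [apply: K_val | rewrite qpi_val]. Qed.

Lemma qpi_eq x y : K x -> K y -> (qpi x = qpi y <-> L (x - y)).
Proof.
move=> Kx Ky; split=> [|Lxy]; last by apply: val_inj; rewrite !val_qpi //; apply: crepr_eq.
move/(congr1 val); rewrite !val_qpi // => E.
have [_ Lx] := creprP Kx; have [_ Ly] := creprP Ky.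
have -> : x - y = (x - crepr x) - (y - crepr y) by rewrite E opprB addrA subrK.
exact: dgidealB.
Qed.

Lemma L_qpi_sub x : K x -> L (val (qpi x) - x).
Proof. by move=> Kx; rewrite val_qpi // -opprB; apply: dgidealN; case: (creprP Kx). Qed.

Lemma qpi_valD x y : K x -> K y -> qpi (val (qpi x) + y) = qpi (x + y).
Proof.
move=> Kx Ky; apply/qpi_eq; [exact: dgidealD (K_val _) Ky | exact: dgidealD |].
by rewrite opprD addrACA subrr addr0; apply: L_qpi_sub.
Qed.

Definition subquot_add (q q' : subquot) : subquot := qpi (val q + val q').
Definition subquot_opp (q : subquot) : subquot := qpi (- val q).
Definition subquot_zero : subquot := qpi 0.

Lemma subquot_addA : associative subquot_add.
Proof.
move=> a b c; have Kv := K_val.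
rewrite /subquot_add qpi_valD ?[val a + _]addrC ?qpi_valD; try by [apply: dgidealD | apply: Kv].
by rewrite -addrA [val c + _]addrC addrA.
Qed.

Lemma subquot_addC : commutative subquot_add.
Proof. by move=> a b; rewrite /subquot_add addrC. Qed.

Lemma subquot_add0 : left_id subquot_zero subquot_add.
Proof.
by move=> a; rewrite /subquot_add qpi_valD ?add0r ?qpi_val //; [apply: dgideal0 | apply: K_val].
Qed.

Lemma subquot_addN : left_inverse subquot_zero subquot_opp subquot_add.
Proof.
by move=> a; rewrite /subquot_add /subquot_opp qpi_valD ?addNr //; [apply: dgidealN|]; apply: K_val.
Qed.

HB.instance Definition _ :=
  GRing.isZmodule.Build subquot subquot_addA subquot_addC subquot_add0 subquot_addN.

Lemma subquot_addE (q q' : subquot) : q + q' = qpi (val q + val q').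
Proof. by []. Qed.

Lemma subquot_oppE (q : subquot) : - q = qpi (- val q).
Proof. by []. Qed.

Lemma qpi0 : qpi 0 = 0.
Proof. by []. Qed.

Lemma qpiD x y : K x -> K y -> qpi (x + y) = qpi x + qpi y.
Proof.
move=> Kx Ky; have Kqy := K_val (qpi y).
apply/esym; rewrite subquot_addE qpi_valD //.
by rewrite addrC qpi_valD // addrC.
Qed.

Lemma qpiN x : K x -> qpi (- x) = - qpi x.
Proof.
move=> Kx; rewrite subquot_oppE; apply/qpi_eq; [exact: dgidealN | apply: dgidealN; exact: K_val |].
by rewrite opprK addrC; apply: L_qpi_sub.
Qed.

Lemma qpiB x y : K x -> K y -> qpi (x - y) = qpi x - qpi y.
Proof. by move=> Kx Ky; rewrite qpiD ?qpiN //; dgideal_closed. Qed.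

Lemma qpi_sum (T : Type) (r : seq T) (P : pred T) (F : T -> A) :
  (forall i, P i -> K (F i)) -> qpi (\sum_(i <- r | P i) F i) = \sum_(i <- r | P i) qpi (F i).
Proof.
move=> KF; elim: r => [|j r IH]; first by rewrite !big_nil.
rewrite !big_cons; case: ifP => Pj //.
by rewrite qpiD ?IH //; [apply: KF | apply: dgideal_sum].
Qed.

Lemma qpi_eq0 x : K x -> (qpi x = 0 <-> L x).
Proof. by move=> Kx; rewrite -qpi0 qpi_eq ?subr0 //; apply: dgideal0. Qed.

Definition subquot_act (a : A) (q : subquot) : subquot := qpi (a * val q).
Definition subquot_hom (n : int) (q : subquot) : Prop :=
  exists x, [/\ hom n x, K x & qpi x = q].
Definition subquot_delta (q : subquot) : subquot := qpi (d (val q)).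

Lemma subquot_act_qpi a x : K x -> subquot_act a (qpi x) = qpi (a * x).
Proof.
move=> Kx; apply/qpi_eq; [apply: dgideal_mull; exact: K_val | exact: dgideal_mull |].
by rewrite -mulrBr; apply: dgideal_mull; apply: L_qpi_sub.
Qed.

Hypothesis HA : is_dg_algebra hom d.

Lemma subquot_delta_qpi x : K x -> subquot_delta (qpi x) = qpi (d x).
Proof.
move=> Kx; apply/qpi_eq; [apply: dgideal_d; exact: K_val | exact: dgideal_d |].
by rewrite -(dB HA); apply: dgideal_d; apply: L_qpi_sub.
Qed.

Lemma subquot_graded : graded_zmod subquot_hom.
Proof.
have hA := dga_graded HA; have Kn := @dgideal_gcomp _ _ _ _ HA K.
split; first by move=> n; exists 0; split; rewrite ?qpi0 //; [exact: homog0 | exact: dgideal0].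
split.
  move=> n _ _ [x [hx Kx <-]] [y [hy Ky <-]].
  by exists (x - y); split; rewrite ?qpiB //; [exact: homogB | exact: dgidealB].
split.
  move=> q; have [x Kx ->] := qpi_surj q.
  exists (gsupp hom x), (fun n => qpi (gcomp hom n x)); split; first exact: gsupp_uniq.
  split; first by move=> n _; exists (gcomp hom n x); split=> //; [exact: homog_gcomp | exact: Kn].
  by rewrite -qpi_sum ?sum_gcomp // => n _; apply: Kn.
(* Lift the components to homogeneous [g n] in [K]: their sum lies in the
   graded ideal [L]. *)
move=> s f us hf sf.
pose g n := epsilon (inhabits 0) (fun x => [/\ hom n x, K x & qpi x = f n]).
have gs n : n \in s -> [/\ hom n (g n), K (g n) & qpi (g n) = f n].
  by move/hf; apply: epsilon_spec.
have hg n : n \in s -> hom n (g n) by case/gs.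
have Kg n : n \in s -> K (g n) by case/gs.
have Lg : L (\sum_(n <- s) g n).
  apply/qpi_eq0; first by rewrite big_seq; apply: dgideal_sum => n /Kg.
  rewrite big_seq qpi_sum; last by move=> n /Kg.
  by apply: etrans sf; rewrite [RHS]big_seq; apply: eq_bigr => n /gs [].
move=> n ns; case: (gs n ns) => _ Kgn <-; apply/qpi_eq0 => //.
exact: (dgideal_graded L _ Lg s g us hg (erefl _) n ns).
Qed.

Lemma subquot_is_dg : is_dg_module hom d subquot_act subquot_hom subquot_delta.
Proof.
have Kv := K_val.
split; first exact: subquot_graded.
split.
  move=> a q q'; have [x Kx ->] := qpi_surj q; have [y Ky ->] := qpi_surj q'.
  by rewrite -qpiD // !subquot_act_qpi ?mulrDr ?qpiD //; dgideal_closed.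
split.
  move=> a b q; have [x Kx ->] := qpi_surj q.
  by rewrite !subquot_act_qpi // mulrDl qpiD //; dgideal_closed.
split; first by move=> q; have [x Kx ->] := qpi_surj q; rewrite subquot_act_qpi // mul1r.
split.
  move=> a b q; have [x Kx ->] := qpi_surj q.
  by rewrite !subquot_act_qpi ?mulrA //; dgideal_closed.
split.
  move=> m n a _ ha [x [hx Kx <-]]; exists (a * x).
  by split; [exact: (homM HA ha hx) | exact: dgideal_mull | rewrite subquot_act_qpi].
split.
  move=> q q'; have [x Kx ->] := qpi_surj q; have [y Ky ->] := qpi_surj q'.
  by rewrite -qpiD // !subquot_delta_qpi ?(dD HA) ?qpiD //; dgideal_closed.
split.
  move=> n _ [x [hx Kx <-]]; exists (d x).
  by split; [exact: (hom_d HA hx) | exact: dgideal_d | rewrite subquot_delta_qpi].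
split.
  move=> q; have [x Kx ->] := qpi_surj q.
  by rewrite !subquot_delta_qpi ?(dd0 HA) //; dgideal_closed.
move=> n a q ha; have [x Kx ->] := qpi_surj q.
rewrite subquot_act_qpi // !subquot_delta_qpi ?subquot_act_qpi //; try by dgideal_closed.
rewrite (d_Leibniz HA _ ha) qpiD; try by dgideal_closed.
by rewrite /ksign; case: ifP => _ //; rewrite qpiN //; dgideal_closed.
Qed.

Definition subquot_dgmod : dgmod hom d := DGMod subquot_is_dg.

Lemma gcomp_qpi n x : K x -> gcomp subquot_hom n (qpi x) = qpi (gcomp hom n x).
Proof.
move=> Kx; have hA := dga_graded HA; have Kn := @dgideal_gcomp _ _ _ _ HA K.
have e : qpi x = \sum_(m <- gsupp hom x) qpi (gcomp hom m x).
  by rewrite -qpi_sum ?(sum_gcomp hA) // => m _; apply: Kn.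
rewrite (gcomp_unique subquot_graded (gsupp_uniq hA x) _ e).
  by case: ifP => // /negbT nx; rewrite gcomp_notin.
by move=> m _; exists (gcomp hom m x); split=> //; [exact: (homog_gcomp hA) | exact: Kn].
Qed.

Lemma subquot_annihilated (J : A -> Prop) : (forall a x, J a -> K x -> L (a * x)) ->
  annihilated_by J subquot_dgmod.
Proof.
move=> JKL a Ja q; rewrite /= /subquot_act; apply/qpi_eq0.
  by apply: dgideal_mull; apply: K_val.
by apply: JKL => //; apply: K_val.
Qed.

End Subquotient.

(** * Acyclicity *)

Section Cone.
Variables (R : comPzRingType) (A : algType R) (hom : int -> A -> Prop) (d : A -> A).
Variable M : dgmod hom d.
Local Notation act := (@dg_act _ _ _ _ M).
Local Notation mhom := (@dg_hom _ _ _ _ M).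
Local Notation delta := (@dg_delta _ _ _ _ M).
Let hM := dgmod_graded M.

Definition gsign (x : M) : M := \sum_(n <- gsupp mhom x) ksign n (gcomp mhom n x).

Lemma gsign_sup t x : uniq t -> {subset gsupp mhom x <= t} ->
  gsign x = \sum_(n <- t) ksign n (gcomp mhom n x).
Proof.
move=> ut st; rewrite /gsign -(sum_mem_subset _ ut (gsupp_uniq hM x) st).
by apply: eq_bigr => n _; case: ifP => // /negbT /gcomp_notin ->; rewrite ksignr0.
Qed.

Lemma gsignD x y : gsign (x + y) = gsign x + gsign y.
Proof.
set t := undup (gsupp mhom x ++ gsupp mhom y ++ gsupp mhom (x + y)).
have ut : uniq t by apply: undup_uniq.
have sub z : {subset gsupp mhom z <= t} -> gsign z = \sum_(n <- t) ksign n (gcomp mhom n z).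
  exact: gsign_sup.
rewrite !sub -?big_split /=; try by move=> n nz; rewrite mem_undup !mem_cat nz ?orbT.
by apply: eq_bigr => n _; rewrite gcompD // ksignD.
Qed.

Lemma gsign_homog m x : mhom m x -> gsign x = ksign m x.
Proof.
move=> hx; rewrite (@gsign_sup (undup (m :: gsupp mhom x))) ?undup_uniq //; last first.
  by move=> n nx; rewrite mem_undup in_cons nx orbT.
rewrite (eq_bigr (fun n => if n \in [:: m] then ksign m x else 0)).
  rewrite sum_mem_subset ?big_seq1 ?undup_uniq // => n; rewrite mem_seq1 => /eqP ->.
  by rewrite mem_undup mem_head.
by move=> n _; rewrite (gcomp_homog hM _ hx) mem_seq1; case: eqP => [-> // | _]; rewrite ksignr0.
Qed.

Lemma gsign_delta x : gsign (delta x) = - delta (gsign x).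
Proof.
move: x; apply: (homog_ind hM (P := fun x => gsign (delta x) = - delta (gsign x))).
- by rewrite delta0 (additive0 gsignD) delta0 oppr0.
- by move=> x y Hx Hy; rewrite deltaD !gsignD Hx Hy deltaD opprD.
move=> m x hx; rewrite (gsign_homog hx) (gsign_homog (hom_delta hx)) ksignS.
by rewrite (ksign_morph (additiveN (@deltaD _ _ _ _ M))).
Qed.

Lemma gsign_act n a x : hom n a -> gsign (act a x) = ksign n (act a (gsign x)).
Proof.
move=> ha; move: x.
apply: (homog_ind hM (P := fun x => gsign (act a x) = ksign n (act a (gsign x)))).
- by rewrite act0r (additive0 gsignD) act0r ksignr0.
- by move=> x y Hx Hy; rewrite actDr !gsignD Hx Hy actDr ksignD.
move=> m x hx; rewrite (gsign_homog hx) (gsign_homog (hom_act ha hx)) ksign_addz.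
by rewrite (ksign_morph (additiveN (actDr a))).
Qed.

Definition cone_act (a : A) (p : M * M) : M * M := (act a p.1, act a p.2).
Definition cone_hom (n : int) (p : M * M) : Prop := mhom n p.1 /\ mhom (n + 1) p.2.
Definition cone_delta (p : M * M) : M * M := (delta p.1 + gsign p.2, delta p.2).

Lemma cone_is_dg : is_dg_module hom d cone_act cone_hom cone_delta.
Proof.
split; first exact: (graded_prod hM (graded_shift 1 hM)).
split; first by move=> a [x y] [x' y']; rewrite /cone_act /= !actDr.
split; first by move=> a b [x y]; rewrite /cone_act /= !actDl.
split; first by move=> [x y]; rewrite /cone_act /= !act1.
split; first by move=> a b [x y]; rewrite /cone_act /= !actA.
split.
  move=> m n a [x y] ha [hx hy]; split; first exact: hom_act ha hx.
  by rewrite /= -addrA; apply: hom_act ha hy.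
split; first by move=> [x y] [x' y']; rewrite /cone_delta /= !deltaD gsignD addrACA.
split.
  move=> n [x y] [hx hy]; split=> /=; last exact: hom_delta hy.
  apply: (homogD hM); first exact: hom_delta hx.
  by rewrite (gsign_homog hy) /ksign; case: ifP => _ //; apply: homogN.
split; first by move=> [x y]; rewrite /cone_delta /= deltaD !delta_delta0 gsign_delta add0r subrr.
move=> n a [x y] ha; rewrite /cone_delta /cone_act /=.
have -> : ksign n (act a (delta x + gsign y), act a (delta y)) =
    (ksign n (act a (delta x + gsign y)), ksign n (act a (delta y))).
  by rewrite /ksign; case: ifP.
rewrite /= !(delta_Leibniz _ ha) actDr ksignD (gsign_act y ha).
by apply: injective_projections; rewrite /= ?addrA.
Qed.

Definition cone : dgmod hom d := DGMod cone_is_dg.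

Lemma shift_is_dg : is_dg_module hom d act (fun n => mhom (n + 1)) delta.
Proof.
split; first exact: graded_shift 1 hM.
split; first exact: actDr.
split; first exact: actDl.
split; first exact: act1.
split; first exact: actA.
split; first by move=> m n a x ha hx; rewrite -addrA; apply: hom_act ha hx.
split; first exact: deltaD.
split; first by move=> n x hx; apply: hom_delta.
split; first exact: delta_delta0.
move=> n a x ha; exact: delta_Leibniz.
Qed.

Definition shift : dgmod hom d := DGMod shift_is_dg.

(* A splitting [s] of [0 -> M -> cone -> shift -> 0] is a contraction:
   its first component inverts [gsign] up to the differential. *)
Lemma cycle_is_boundary (J : A -> Prop) :
  dg_semisimple_quot hom d J -> annihilated_by J M ->
  forall k z, mhom k z -> delta z = 0 -> exists t, delta t = z.
Proof.
move=> Hss JM k z hz dz.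
have Jcone : annihilated_by J cone by move=> a Ja [x y]; rewrite /= /cone_act /= !JM.
have Jshift : annihilated_by J shift by move=> a Ja x; rewrite /= JM.
have incl : dg_morph (M1 := M) (M2 := cone) (fun x => (x, 0)).
  split; first by move=> x y; apply: injective_projections; rewrite /= ?addr0.
  split; first by move=> a x; rewrite /= /cone_act /= act0r.
  split; first by move=> n x hx; split => //; apply: homog0 hM _.
  by move=> x; rewrite /= /cone_delta /= (additive0 gsignD) delta0 addr0.
have proj : dg_morph (M1 := cone) (M2 := shift) snd.
  split; first by move=> [x y] [x' y'].
  split; first by move=> a [x y].
  split; first by move=> n [x y] [].
  by move=> [x y].
have incl_inj : injective (fun x : M => ((x, 0) : cone)) by move=> x y /(congr1 fst).
have proj_surj (w : shift) : exists y : cone, y.2 = w by exists (0, w).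
have exact_at_cone (y : cone) : y.2 = 0 <-> exists x, y = (x, 0).
  by case: y => x y; split=> [/= -> | [x' [_ ->]]]; first exists x.
have [s [[sD [_ [_ sdelta]]] sK]] :=
  Hss M cone shift JM Jcone Jshift _ _ incl proj incl_inj proj_surj exact_at_cone.
have := sdelta z; rewrite dz (additive0 sD) => /(congr1 fst) /=.
rewrite sK (gsign_homog hz) => /esym/eqP; rewrite addr_eq0 => /eqP du.
have deltaN := additiveN (@deltaD _ _ _ _ M).
by exists (- ksign k (s z).1); rewrite deltaN (ksign_morph deltaN) du ksignN ksignK opprK.
Qed.

End Cone.

Section Acyclicity.
Variables (R : comPzRingType) (A : algType R) (hom : int -> A -> Prop) (d : A -> A).
Hypothesis HA : is_dg_algebra hom d.
Local Notation J := (dgrad hom d).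

Lemma dgrad_nilpotent_exp : dgrad_nilpotent hom d -> forall j, J j -> exists n, j ^+ n = 0.
Proof.
by case=> n Hn j Jj; exists n; have := Hn (fun _ => j) (fun _ => Jj); rewrite prodr_const card_ord.
Qed.

Lemma one_boundary_mod_dgrad : dg_semisimple_quot hom d J ->
  exists2 z, hom (-1) z & J (1 - d z).
Proof.
move=> Hss; pose top := dgideal_top hom d; pose rad := dgideal_rad HA.
have JQ : annihilated_by J (subquot_dgmod top rad HA).
  by apply: subquot_annihilated => a x Ja _; apply: dgrad_mulr.
have hom_1 : subquot_hom 0 (qpi top rad 1) by exists 1; split=> //; apply: hom_one HA.
have cycle_1 : subquot_delta (qpi top rad 1) = 0 by rewrite subquot_delta_qpi // (d1 HA).
have [t dt] := cycle_is_boundary Hss JQ hom_1 cycle_1.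
have /qpi_eq Jt : qpi top rad (d (val t)) = qpi top rad 1 by rewrite -dt.
exists (gcomp hom (-1) (val t)); first exact: (homog_gcomp (dga_graded HA)).
have := dgrad_gcomp HA 0 (Jt I I).
rewrite (additiveB (gcompD (dga_graded HA) 0)).
rewrite (gcomp_homog (dga_graded HA) _ (hom_one HA)) eqxx.
have -> : gcomp hom 0 (d (val t)) = d (gcomp hom (-1) (val t)) by rewrite -(gcomp_d HA) addNr.
by move=> J1; have := dgradB (@dgrad0 _ _ hom d) J1; rewrite sub0r opprB.
Qed.

Lemma hom0_exp j i : hom 0 j -> hom 0 (j ^+ i).
Proof.
move=> hj; elim: i => [|i IH]; first exact: hom_one HA.
by rewrite exprS -(addr0 0); apply: (homM HA).
Qed.

Lemma d_exp_cycle j i : hom 0 j -> d j = 0 -> d (j ^+ i) = 0.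
Proof.
move=> hj dj; elim: i => [|i IH]; first exact: d1 HA.
by rewrite exprS (d_Leibniz HA _ hj) dj IH mul0r mulr0 ksignr0 addr0.
Qed.

Lemma exists_d_eq1 : dg_semisimple_quot hom d J -> dgrad_nilpotent hom d ->
  exists2 w, hom (-1) w & d w = 1.
Proof.
move=> Hss Hnil; have [z hz Jj] := one_boundary_mod_dgrad Hss.
set j := 1 - d z in Jj; have [n jn] := dgrad_nilpotent_exp Hnil Jj.
have hj : hom 0 j.
  by apply: (homogB (dga_graded HA) (hom_one HA)); rewrite -(addNr 1); apply: (hom_d HA).
have dj : d j = 0 by rewrite (dB HA) (d1 HA) (dd0 HA) subrr.
pose v := \sum_(i < n) j ^+ i.
have dv : d v = 0 by rewrite (additive_sum (dD HA)) big1 // => i _; apply: d_exp_cycle.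
exists (z * v).
  rewrite -(addr0 (-1)); apply: (homM HA hz).
  by apply: (homog_sum (dga_graded HA)) => i _; apply: hom0_exp.
rewrite (d_Leibniz HA _ hz) dv mulr0 ksignr0 addr0.
have -> : d z = 1 - j by rewrite /j opprB addrC subrK.
by rewrite -opprB mulNr -subrX1 jn sub0r opprK.
Qed.

Lemma acyclic_of_d_eq1 n w : hom n w -> d w = 1 -> acyclic d.
Proof.
move=> hw dw x; split=> [dx | [y ->]]; last exact: (dd0 HA).
by exists (w * x); rewrite (d_Leibniz HA _ hw) dw mul1r dx mulr0 ksignr0 addr0.
Qed.

End Acyclicity.

(** * Complements and ascending chains *)

Lemma gcomp_dg_morph (R : comPzRingType) (A : algType R) (hom : int -> A -> Prop)
    (d : A -> A) (M1 M2 : dgmod hom d) (f : M1 -> M2) :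
  dg_morph f ->
  forall n x, gcomp (@dg_hom _ _ _ _ M2) n (f x) = f (gcomp (@dg_hom _ _ _ _ M1) n x).
Proof.
case=> fD [_ [fh _]] n x; rewrite -{1}[n]addr0.
apply: (gcomp_morph (dgmod_graded M1) (dgmod_graded M2) fD) => m v hv.
by rewrite addr0; apply: fh.
Qed.

Section Complement.
Variables (R : comPzRingType) (A : algType R) (hom : int -> A -> Prop) (d : A -> A).
Hypothesis HA : is_dg_algebra hom d.
Local Notation J := (dgrad hom d).
Local Notation "K / L" := (subquot_dgmod K L HA).

Definition subquot_map (K' L K L' : dgideal hom d) (q : subquot K' L) : subquot K L' :=
  qpi K L' (val q).

Section SubquotMap.
Variables (K' L K L' : dgideal hom d).
Hypotheses (KK : forall x, K' x -> K x) (LL : forall x, L x -> L' x).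

Lemma subquot_mapE y : K' y -> subquot_map K L' (qpi K' L y) = qpi K L' y.
Proof.
move=> Ky; apply/qpi_eq; [apply/KK/K_val | exact: KK |].
by apply/LL/L_qpi_sub.
Qed.

Lemma subquot_map_morph : dg_morph (M1 := K' / L) (M2 := K / L') (subquot_map K L').
Proof.
split.
  move=> q q'; have [y Ky ->] := qpi_surj q; have [y' Ky' ->] := qpi_surj q'.
  have Kyy' : K' (y + y') by apply: dgidealD.
  by rewrite -qpiD // !subquot_mapE // qpiD //; apply: KK.
split.
  move=> a q; have [y Ky ->] := qpi_surj q.
  have Kay : K' (a * y) by apply: dgideal_mull.
  rewrite [X in subquot_map _ _ X]/= subquot_act_qpi // !subquot_mapE //.
  by rewrite [RHS]/= subquot_act_qpi //; apply: KK.
split; first by move=> n q [x [hx Kx <-]]; exists x; split; rewrite ?subquot_mapE //; apply: KK.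
move=> q; have [y Ky ->] := qpi_surj q.
have Kdy : K' (d y) by apply: dgideal_d.
rewrite [X in subquot_map _ _ X]/= subquot_delta_qpi // !subquot_mapE //.
by rewrite [RHS]/= subquot_delta_qpi //; apply: KK.
Qed.

End SubquotMap.

Section ShortExact.
Variables (L I K : dgideal hom d).
Hypotheses (LI : forall x, L x -> I x) (IK : forall x, I x -> K x).
Let LK x : L x -> K x := fun Lx => IK (LI Lx).
Let incl := @subquot_mapE I L K L IK (fun x Lx => Lx).
Let proj := @subquot_mapE K L K I (fun x Kx => Kx) LI.

Lemma subquot_map_inj : injective (subquot_map K L : subquot I L -> subquot K L).
Proof.
move=> q q'; have [y Iy ->] := qpi_surj q; have [y' Iy' ->] := qpi_surj q'.
by rewrite !incl // => /(qpi_eq L (IK Iy) (IK Iy')) Lyy'; apply/qpi_eq.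
Qed.

Lemma subquot_map_surj (z : subquot K I) : exists y : subquot K L, subquot_map K I y = z.
Proof. by have [y Ky ->] := qpi_surj z; exists (qpi K L y); rewrite proj. Qed.

Lemma subquot_map_exact (y : subquot K L) :
  subquot_map K I y = 0 <-> exists x : subquot I L, y = subquot_map K L x.
Proof.
have [x Kx ->] := qpi_surj y; rewrite proj //; split.
  by move/(qpi_eq0 I Kx) => Ix; exists (qpi I L x); rewrite incl.
case=> q; have [x' Ix' ->] := qpi_surj q; rewrite incl // => /(qpi_eq L Kx (IK Ix')) Lxx'.
by apply/(qpi_eq0 I Kx); rewrite -(subrK x' x); apply: dgidealD (LI Lxx') Ix'.
Qed.

End ShortExact.

Definition is_complement (K L I E : A -> Prop) :=
  [/\ forall x, L x -> E x, forall x, E x -> K x, forall x, I x -> E x -> L x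
    & forall x, K x -> exists2 e, E e & I (x - e)].

Lemma section_dgideal (K L I : dgideal hom d) (s : subquot K I -> subquot K L) :
  dg_morph (M1 := K / I) (M2 := K / L) s ->
  is_left_dg_ideal hom d (fun x => K x /\ exists r, qpi K L x = s r).
Proof.
move=> sm; have [sD [sact [_ sdelta]]] := sm.
have sB := additiveB sD; have s0 := additive0 sD.
have E0 : K 0 /\ exists r, qpi K L 0 = s r by split; [exact: dgideal0 | exists 0; rewrite s0].
split; first exact: E0.
split.
  move=> x y [Kx [r Hr]] [Ky [r' Hr']]; split; first exact: dgidealB.
  by exists (r - r'); rewrite qpiB // sB Hr Hr'.
split.
  move=> a x [Kx [r Hr]]; split; first exact: dgideal_mull.
  by exists (@dg_act _ _ _ _ (K / I) a r); rewrite sact -Hr /= subquot_act_qpi.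
split.
  apply/(graded_subP (dga_graded HA) E0) => x [Kx [r Hr]] n.
  split; first exact: dgideal_gcomp.
  exists (gcomp (@dg_hom _ _ _ _ (K / I)) n r).
  by rewrite -(gcomp_qpi L HA n Kx) -(gcomp_dg_morph sm) Hr.
move=> x [Kx [r Hr]]; split; first exact: dgideal_d.
by exists (@dg_delta _ _ _ _ (K / I) r); rewrite sdelta -Hr /= subquot_delta_qpi.
Qed.

(* A splitting [s] of [0 -> I/L -> K/L -> K/I -> 0] gives the complement
   [{x in K | x mod L lies in the image of s}]. *)
Lemma exists_complement (K L I : dgideal hom d) :
  dg_semisimple_quot hom d J ->
  (forall x, L x -> I x) -> (forall x, I x -> K x) ->
  (forall a x, J a -> K x -> L (a * x)) ->
  exists E : dgideal hom d, is_complement K L I E.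
Proof.
move=> Hss LI IK JKL; have LK x : L x -> K x by move/LI/IK.
have proj := subquot_mapE (L := L) (L' := I) (fun x Kx => Kx) LI.
have JIL : annihilated_by J (I / L).
  by apply: subquot_annihilated => a x Ja Ix; apply: JKL => //; apply: IK.
have JKL' : annihilated_by J (K / L) by apply: subquot_annihilated.
have JKI : annihilated_by J (K / I).
  by apply: subquot_annihilated => a x Ja Kx; apply/LI/JKL.
have [s [sm sK]] := Hss _ _ _ JIL JKL' JKI _ _
  (subquot_map_morph IK (fun x Lx => Lx)) (subquot_map_morph (fun x Kx => Kx) LI)
  (subquot_map_inj IK) (subquot_map_surj LI) (subquot_map_exact LI IK).
have [sD _] := sm; have s0 := additive0 sD.
exists (DGIdeal (section_dgideal sm)); split.
- move=> x Lx; split; first exact: LK.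
  by exists 0; rewrite s0; apply/qpi_eq0 => //; exact: LK.
- by move=> x [].
- move=> x Ix [Kx [r Hr]]; apply/(qpi_eq0 L Kx).
  have := sK r; rewrite -Hr proj // (proj2 (qpi_eq0 I Kx) Ix).
  by move=> r0; rewrite Hr -r0 s0.
move=> x Kx; exists (val (s (qpi K I x))).
  by split; [exact: K_val | exists (qpi K I x); rewrite qpi_val].
have := sK (qpi K I x); rewrite /subquot_map => /(qpi_eq I (K_val _) Kx) H.
by rewrite -opprB; apply: dgidealN.
Qed.

Definition complement (K L I : dgideal hom d) : dgideal hom d :=
  epsilon (inhabits K) (fun E : dgideal hom d => is_complement K L I E).

Lemma complementP (K L I : dgideal hom d) :
  dg_semisimple_quot hom d J ->
  (forall x, L x -> I x) -> (forall x, I x -> K x) ->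
  (forall a x, J a -> K x -> L (a * x)) -> is_complement K L I (complement K L I).
Proof.
move=> Hss LI IK JKL; have [E HE] := exists_complement Hss LI IK JKL.
by apply: (epsilon_spec (inhabits K) (fun E : dgideal hom d => is_complement K L I E)); exists E.
Qed.

End Complement.

Section ChainStabilization.
Variables (R : comPzRingType) (A : algType R) (hom : int -> A -> Prop) (d : A -> A).
Hypothesis HA : is_dg_algebra hom d.
Hypothesis Hss : dg_semisimple_quot hom d (dgrad hom d).
Hypothesis Hart : left_dg_artinian hom d.
Local Notation J := (dgrad hom d).

Variables (K L : dgideal hom d) (P : nat -> dgideal hom d).
Hypothesis JKL : forall a x, J a -> K x -> L (a * x).
Hypotheses (LP : forall k x, L x -> P k x) (PK : forall k x, P k x -> K x).
Hypothesis P_incr : forall k x, P k x -> P k.+1 x.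

Fixpoint complement_chain k : dgideal hom d :=
  if k is k'.+1 then
    complement (complement_chain k') L (dgideal_cap HA (P k) (complement_chain k'))
  else complement K L (P 0).

Lemma complement_chainS k : is_complement K L (P k) (complement_chain k) ->
  is_complement (complement_chain k) L
    (dgideal_cap HA (P k.+1) (complement_chain k)) (complement_chain k.+1).
Proof.
case=> LE EK _ _; apply: (complementP HA Hss) => [x Lx | x [] // | a x Ja /EK].
  by split; [apply: LP | apply: LE].
exact: JKL.
Qed.

Lemma complement_chainP k : is_complement K L (P k) (complement_chain k).
Proof.
elim: k => [|k IH]; first exact: (complementP HA Hss (LP 0) (@PK 0) JKL).
have [LE' EE' PEL' EEP'] := complement_chainS IH; have [_ EK _ KEP] := IH.
split=> // [x /EE' /EK // | x Px Ex | x Kx].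
  by apply: (PEL' x _ Ex); split=> //; apply: EE'.
have [e Ee Pxe] := KEP x Kx; have [e' Ee' [Pee' _]] := EEP' e Ee.
by exists e' => //; rewrite -(subrK e x) -addrA; apply: dgidealD => //; apply: P_incr.
Qed.

Lemma complement_chain_decr k x : complement_chain k.+1 x -> complement_chain k x.
Proof. by have [_ EE' _ _] := complement_chainS (complement_chainP k); apply: EE'. Qed.

(* Once the complements [E k := complement_chain k] stop shrinking,
   [P k.+1 \subset P k]: an element of [P k.+1] differs from its [E k]-part by
   an element of [P k], and that part lies in [P k.+1 \cap E k.+1 \subset L]. *)
Lemma ascending_chain_stable_between :
  exists N, forall k, (N <= k)%N -> forall x, P k x -> P N x.
Proof.
have [N HN] := Hart (fun k => dgidealP (complement_chain k)) complement_chain_decr.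
have step k : (N <= k)%N -> forall x, P k.+1 x -> P k x.
  move=> Nk x Px; have [_ _ _ KEP] := complement_chainP k.
  have [e Ee Pxe] := KEP x (PK Px).
  have Pe : P k.+1 e.
    by rewrite -(subKr x e); apply: dgidealB => //; apply: P_incr.
  have Ee1 : complement_chain k.+1 e by apply/(HN k.+1 (leqW Nk))/(HN k Nk).
  have [_ _ PEL _] := complement_chainP k.+1.
  by rewrite -(subrK e x); apply: dgidealD => //; apply/LP/PEL.
exists N => k /subnKC <-; elim: (k - N)%N => [|m IH] x; first by rewrite addn0.
by rewrite addnS => /(step _ (leq_addr _ _)); apply: IH.
Qed.

End ChainStabilization.

Lemma ascending_chain_le (T : Type) (I : nat -> T -> Prop) :
  (forall k x, I k x -> I k.+1 x) -> forall m k, (m <= k)%N -> forall x, I m x -> I k x.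
Proof.
move=> Iincr; exact: (@homo_leq _ I (fun P Q => forall x, P x -> Q x)
  (fun P x Px => Px) (fun Q P S PQ QS x Px => QS x (PQ x Px)) Iincr).
Qed.

Section AnnihilatorFiltration.
Variables (R : comPzRingType) (A : algType R) (hom : int -> A -> Prop) (d : A -> A).
Hypothesis HA : is_dg_algebra hom d.
Local Notation J := (dgrad hom d).

Lemma zero_dgideal : is_left_dg_ideal hom d (fun x => x = 0).
Proof.
split=> //; split; first by move=> x y -> ->; rewrite subr0.
split; first by move=> a x ->; rewrite mulr0.
split; last by move=> x ->; apply: d0 HA.
move=> x -> s f us hs e n ns; case: (dga_graded HA) => _ [_ [_ Hu]].
exact: Hu s f us hs (esym e) n ns.
Qed.

(* Each component [c_m * x] of [c * x] lies in [S] because [c_m] is again in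
   the radical; for [d x] use [c * d x = +- (d (c * x) - d c * x)]. *)
Lemma colon_dgideal (S : dgideal hom d) :
  is_left_dg_ideal hom d (fun x => forall c, J c -> S (c * x)).
Proof.
have hA := dga_graded HA.
have col0 c : J c -> S (c * 0) by rewrite mulr0 => _; apply: dgideal0.
split; first exact: col0.
split; first by move=> x y Sx Sy c Jc; rewrite mulrBr; apply: dgidealB; [apply: Sx | apply: Sy].
split; first by move=> a x Sx c Jc; rewrite mulrA; apply: Sx; apply: dgrad_mulr.
split.
  apply/(graded_subP hA col0) => x Sx n c Jc.
  rewrite -(sum_gcomp hA c) mulr_suml; apply: dgideal_sum => m _.
  rewrite -(gcomp_mull HA n x (homog_gcomp hA m c)).
  by apply: dgideal_gcomp => //; apply: Sx; apply: dgrad_gcomp.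
move=> x Sx c Jc; rewrite -(sum_gcomp hA c) mulr_suml; apply: dgideal_sum => m _.
have hcm := homog_gcomp hA m c; have Jcm := dgrad_gcomp HA m Jc.
have -> : gcomp hom m c * d x = ksign m (d (gcomp hom m c * x) - d (gcomp hom m c) * x).
  by rewrite (d_Leibniz HA _ hcm) [d _ * x + _]addrC addrK ksignK.
by apply/dgideal_ksign/dgidealB; [apply/dgideal_d/Sx | apply/Sx/dgrad_d].
Qed.

Fixpoint dgrad_ann (j : nat) : dgideal hom d :=
  if j is j'.+1 then DGIdeal (colon_dgideal (dgrad_ann j')) else DGIdeal zero_dgideal.

Lemma dgrad_annS j x : dgrad_ann j x -> dgrad_ann j.+1 x.
Proof.
elim: j x => [|j IH] x /=; first by move=> -> c _; rewrite mulr0.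
by move=> Sx c Jc; apply: IH; apply: Sx.
Qed.

Lemma dgrad_ann_prod j x :
  (forall f : 'I_j -> A, (forall i, J (f i)) -> (\prod_(i < j) f i) * x = 0) ->
  dgrad_ann j x.
Proof.
elim: j x => [|j IH] x Hx /=.
  by have := Hx (fun _ => 0) (fun _ => @dgrad0 _ _ hom d); rewrite big_ord0 mul1r.
move=> c Jc; apply: IH => f Jf.
pose f' i := oapp f c (unlift ord_max i).
have := Hx f'; rewrite big_ord_recr /= /f' unlift_none /= mulrA.
have -> : \prod_(i < j) oapp f c (unlift ord_max (widen_ord (leqnSn j) i)) = \prod_(i < j) f i.
  apply: eq_bigr => i _.
  have -> : widen_ord (leqnSn j) i = lift ord_max i by apply: val_inj; rewrite [RHS]lift_max.
  by rewrite liftK.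
by apply=> i; case: (unlift ord_max i).
Qed.

Hypothesis Hss : dg_semisimple_quot hom d J.
Hypothesis Hart : left_dg_artinian hom d.
Variable I : nat -> dgideal hom d.
Hypothesis I_incr : forall k x, I k x -> I k.+1 x.

(* Induction on [j]: the layer [dgrad_ann j.+1 / dgrad_ann j] is annihilated
   by the radical, so the chain of its submodules cut out by [I] stabilizes. *)
Lemma ascending_chain_stable_in_dgrad_ann j :
  exists N, forall k, (N <= k)%N -> forall x, I k x -> dgrad_ann j x -> I N x.
Proof.
have I_le := ascending_chain_le I_incr.
elim: j => [|j [N1 H1]]; first by exists 0%N => k _ x _ ->; apply: dgideal0.
pose K := dgrad_ann j.+1; pose L := dgrad_ann j.
pose P k := dgideal_add HA (dgideal_cap HA (I k) K) L.
have LK x : L x -> K x by apply: dgrad_annS.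
have [N2 H2] : exists N, forall k, (N <= k)%N -> forall x, P k x -> P N x.
  apply: (@ascending_chain_stable_between _ _ _ _ HA Hss Hart K L P).
  - by move=> a x Ja Kx; apply: Kx.
  - by move=> k x Lx; exists 0; [split; apply: dgideal0 | rewrite subr0].
  - by move=> k x [y [_ Ky] Lxy]; rewrite -(subrK y x); apply: dgidealD => //; apply: LK.
  - by move=> k x [y [Iy Ky] Lxy]; exists y => //; split => //; apply: I_incr.
exists (maxn N1 N2) => k Nk x Ix Kx.
have Pkx : P k x by exists x; rewrite ?subrr; [split | apply: dgideal0].
have [y [Iy Ky] Lxy] := H2 k (leq_trans (leq_maxr _ _) Nk) x Pkx.
have Ixy : I N1 (x - y).
  apply: (H1 k (leq_trans (leq_maxl _ _) Nk)) => //.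
  by apply: dgidealB Ix (I_le _ _ (leq_trans (leq_maxr _ _) Nk) _ Iy).
rewrite -(subrK y x); apply: dgidealD; first exact: I_le (leq_maxl _ _) _ Ixy.
exact: I_le (leq_maxr _ _) _ Iy.
Qed.

End AnnihilatorFiltration.

Theorem theorem4p1 (R : comPzRingType) (A : algType R)
    (hom : int -> A -> Prop) (d : A -> A) :
  is_dg_algebra hom d ->
  left_dg_semiprimary hom d ->
  left_dg_artinian hom d ->
  dgrad_nilpotent hom d ->
  left_dg_noetherian hom d /\ acyclic d.
Proof.
move=> HA [Hss _] Hart Hnil; split; last first.
  by have [w hw dw] := exists_d_eq1 HA Hss Hnil; apply: acyclic_of_d_eq1 hw dw.
move=> I HI I_incr; have [n nilJ] := Hnil.
have [N HN] := ascending_chain_stable_in_dgrad_ann HA Hss Hart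
  (I := fun k => DGIdeal (HI k)) I_incr n.
exists N => k Nk x; split; last exact: (ascending_chain_le I_incr Nk).
move=> Ix; apply: (HN k Nk x Ix); apply: dgrad_ann_prod => f Jf.
by rewrite nilJ // mul0r.
Qed.
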